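(* Let $(X,\mathcal{B},\mu)$ be a measure space, $\varphi:X\to X$ a measurable map, $I$ a countable set and $\{B_i\}_{i\in I}$ a family of measurable sets of positive measure. Then the following are equivalent: (i) there exists $A\subseteq\mathbb{N}$ with $\overline{\mathrm{dens}}(A)=1$ such that $\lim_{n\in A}\mu(\varphi^{-n}(B_i))=0$ for all $i\in I$; (ii) there exists an increasing sequence $(M_j)$ in $\mathbb{N}$ such that for every $k\in\mathbb{N}$ and $i\in I$ there is $n_{k,i}\in\mathbb{N}$ with \[\operatorname{card}\{1\le n\le M_j:\ \mu(\varphi^{-n}(B_i))<k^{-1}\}\ge M_j(1-k^{-1})\quad\text{for all } j\ge n_{k,i}.\]
   Context: For $A\subseteq\mathbb{N}$, $\overline{\mathrm{dens}}(A)=\limsup_{N\to\infty}\frac{\operatorname{card}(A\cap[1,N])}{N}$. The notation $\lim_{n\in A}a_n=0$ means $a_n\to0$ as $n\to\infty$ with $n\in A$. *)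

From HB Require Import structures.
From mathcomp Require Import all_boot all_order all_algebra.
From mathcomp Require Import all_classical all_reals all_analysis.
Set Implicit Arguments. Unset Strict Implicit. Unset Printing Implicit Defensive.
Import Order.TTheory GRing.Theory Num.Theory.
Import numFieldNormedType.Exports.
Local Open Scope classical_set_scope.
Local Open Scope ring_scope.

Definition count_upto (A : set nat) (N : nat) : nat :=
  \sum_(1 <= n < N.+1) (n \in A : nat).

(* upper density: limsup_N card(A ∩ [1,N]) / N  (the N = 0 term is 0/0 = 0
   and does not affect the limsup) *)
Definition upper_dens (R : realType) (A : set nat) : R :=
  limn_sup (fun N => (count_upto A N)%:R / N%:R : R).

Definition lim0_along (R : realType) (A : set nat) (a : nat -> \bar R) : Prop :=
  forall e : R, 0 < e -> exists N : nat,
    forall n, (N <= n)%N -> n \in A -> (`|a n| < e%:E)%E.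

From HB Require Import structures.
From mathcomp Require Import all_boot all_order all_algebra.
From mathcomp Require Import all_classical all_reals all_analysis.
From mathcomp Require Import zify.
Set Implicit Arguments. Unset Strict Implicit. Unset Printing Implicit Defensive.
Import Order.TTheory GRing.Theory Num.Theory.
Import numFieldNormedType.Exports.
Local Open Scope classical_set_scope.
Local Open Scope ring_scope.

(* Only the nonnegativity of a_i(n) := mu(phi^-n B_i) matters.  In integers, condition (ii)
   says that #{n <= M_j : a_i(n) >= 1/k} * k <= M_j for large j, and upper density 1 says
   that (N - #(A ∩ [1,N])) * k < N for arbitrarily large N.
   (i) => (ii): take M_j with relative A-density > 1 - 1/(j+1); beyond the index after which
   a_i < 1/k on A, every n with a_i(n) >= 1/k lies outside A.
   (ii) => (i): call n good at level m when a_i(n) < 1/(m+1)^2 for the at most m+1 indices i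
   of code <= m; by (ii), for large j at most M_j/(m+1) integers n <= M_j are not good.  Along
   a subsequence P_m of (M_j) with P_(m+1) > (m+2) P_m, the set A of the n in (P_m, P_(m+1)]
   that are good at level m+1 misses at most 2 P_(m+1)/(m+2) integers of [1, P_(m+1)], and
   a_i -> 0 along A for every i. *)

Lemma sum_nat_iota (P : pred nat) N :
  (\sum_(1 <= n < N.+1) (P n : nat) = count P (iota 1 N))%N.
Proof. by rewrite -sum1_count [RHS]big_mkcond /index_iota subSS subn0. Qed.

Lemma count_upto_iota (A : set nat) N :
  count_upto A N = count (fun n => n \in A) (iota 1 N).
Proof. exact: sum_nat_iota. Qed.

Lemma count_iota_leq a N : (count (fun n => n <= a) (iota 1 N) <= a)%N.
Proof.
rewrite -size_filter -[X in (_ <= X)%N](size_iota 1).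
apply: uniq_leq_size; first exact/filter_uniq/iota_uniq.
by move=> n; rewrite mem_filter !mem_iota => /andP[na /andP[n1 _]]; rewrite n1 add1n ltnS.
Qed.

Lemma count_iota_shift (P Q : pred nat) a N :
  {in iota 1 N, forall n, (a < n)%N -> P n -> Q n} ->
  (count P (iota 1 N) <= a + count Q (iota 1 N))%N.
Proof.
move=> PQ; pose le_a n := (n <= a)%N.
have -> : count P (iota 1 N) = count (predI P (predU le_a Q)) (iota 1 N).
  apply: eq_in_count => n /PQ; rewrite /= /le_a ltnNge.
  by case: (P n) => //; case: leqP => //= _ ->.
apply: (leq_trans (sub_count (a2 := predU le_a Q) _ _)); first by move=> n /andP[].
rewrite -(leq_add2r (count (predI le_a Q) (iota 1 N))) count_predUI.
by rewrite -addnA leq_add ?count_iota_leq ?leq_addr.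
Qed.

Section limn_sup_eq_bound.
Variables (R : realType) (u : R^o^nat) (c : R).
Hypotheses (u_le : forall n, u n <= c) (u_lb : has_lbound (range u)).

Let u_ub : has_ubound (range u). Proof. by exists c => _ [n _ <-]; exact: u_le. Qed.

Let sdrop_self n : sdrop u n (u n). Proof. by exists n => /=. Qed.

Lemma le_sups n m : (n <= m)%N -> u m <= sups u n.
Proof. by move=> nm; apply: ub_le_sup; [exact: has_ubound_sdrop | exists m]. Qed.

Lemma sups_le_bound n : sups u n <= c.
Proof. by apply: ge_sup; [exists (u n) | move=> _ [m _ <-]; exact: u_le]. Qed.

Lemma sups_eq_boundP n :
  sups u n = c <-> forall e, 0 < e -> exists2 N, (n <= N)%N & c - e < u N.
Proof.
split=> [<- e e0 | near_c].
  have [|_ [N nN <-] ltN] := sup_gt (ex_intro _ _ (sdrop_self n)) (x := sups u n - e).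
    by rewrite gtrDl oppr_lt0.
  by exists N.
apply/eqP; rewrite eq_le sups_le_bound; apply/ler_addgt0Pr => e e0.
have [N nN ltN] := near_c e e0.
by rewrite -lerBlDr (le_trans (ltW ltN)) // le_sups.
Qed.

Lemma limn_sup_eq_boundP :
  limn_sup u = c <-> forall n, sups u n = c.
Proof.
split=> [lim_c n | sups_c]; last first.
  by rewrite /limn_sup (_ : sups u = fun=> c) ?lim_cst //; apply/funext.
have sups_decr := nonincreasing_sups u_ub.
have sups_cvg : cvgn (sups u).
  apply: nonincreasing_is_cvgn => //; have [l ul] := u_lb.
  exists l => _ [m _ <-]; have lum : l <= u m by apply: ul; exists m.
  by apply: (le_trans lum); apply: le_sups.
apply/eqP; rewrite eq_le sups_le_bound -lim_c.
exact: nonincreasing_cvgn_ge.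
Qed.
End limn_sup_eq_bound.

Section frequency.
Variables (R : numFieldType) (c N k : nat).
Hypotheses (cN : (c <= N)%N) (k_gt0 : (0 < k)%N).

Lemma ler_freq_nat : (N%:R * (1 - k%:R^-1) <= c%:R :> R) = ((N - c) * k <= N)%N.
Proof.
rewrite mulrBr mulr1 lerBlDr -lerBlDl -natrB // ler_pdivlMr ?ltr0n //.
by rewrite -natrM ler_nat.
Qed.

Lemma ltr_freq_nat : (1 - k%:R^-1 < c%:R / N%:R :> R) = ((N - c) * k < N)%N.
Proof.
have [->|N_gt0] := posnP N.
  by rewrite invr0 mulr0 subr_lt0 invf_gt1 ?ltr0n // ltrn1 ltnNge k_gt0.
rewrite ltr_pdivlMr ?ltr0n // mulrBl mul1r ltrBlDr -ltrBlDl -natrB //.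
by rewrite ltr_pdivlMl ?ltr0n // -natrM ltr_nat mulnC.
Qed.
End frequency.

Lemma upper_dens_eq1P (R : realType) (A : set nat) :
  upper_dens R A = 1 <->
  forall k N0, (0 < k)%N -> exists2 N, (N0 <= N)%N & ((N - count_upto A N) * k < N)%N.
Proof.
have cA_le N : (count_upto A N <= N)%N.
  by rewrite count_upto_iota -[X in (_ <= X)%N](size_iota 1) count_size.
set u : R^o^nat := fun N => (count_upto A N)%:R / N%:R.
have u_le1 N : u N <= 1.
  have [->|N_gt0] := posnP N; first by rewrite /u invr0 mulr0.
  by rewrite /u ler_pdivrMr ?ltr0n // mul1r ler_nat cA_le.
have u_lb : has_lbound (range u) by exists 0 => _ [N _ <-]; rewrite /u divr_ge0.
rewrite /upper_dens -/u (limn_sup_eq_boundP u_le1 u_lb).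
split=> [sups1 k N0 k_gt0 | dense n].
  have [|N N0N] := (sups_eq_boundP u_le1 N0).1 (sups1 N0) k%:R^-1.
    by rewrite invr_gt0 ltr0n.
  by rewrite ltr_freq_nat ?cA_le //; exists N.
apply/(sups_eq_boundP u_le1) => e e_gt0.
have [k ltke] := ltr_add_invr e_gt0; rewrite add0r in ltke.
have [N nN] := dense k.+1 n isT; rewrite -(ltr_freq_nat R) ?cA_le // => dense_N.
by exists N => //; apply: le_lt_trans dense_N; rewrite lerD2l lerN2 ltW.
Qed.

Lemma lim0_alongP (R : realType) (A : set nat) (b : nat -> \bar R) :
  (forall n, 0 <= b n)%E ->
  lim0_along A b <->
  forall k, (0 < k)%N -> exists N, forall n, (N <= n)%N -> n \in A -> (b n < (k%:R^-1)%:E)%E.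
Proof.
move=> b_ge0; split=> [b0 k k_gt0 | small_b e e_gt0].
  have [|N bN] := b0 k%:R^-1; first by rewrite invr_gt0 ltr0n.
  by exists N => n Nn nA; rewrite -(gee0_abs (b_ge0 n)); exact: bN.
have [k ltke] := ltr_add_invr e_gt0; rewrite add0r in ltke.
have [N bN] := small_b k.+1 isT; exists N => n Nn nA.
by rewrite gee0_abs //; apply: lt_le_trans (bN n Nn nA) _; rewrite lee_fin ltW.
Qed.

Lemma dens1_increasing_seq (R : realType) (A : set nat) : upper_dens R A = 1 ->
  exists M : nat -> nat, (forall j, M j < M j.+1)%N /\
    forall j, (j < M j)%N /\ ((M j - count_upto A (M j)) * j.+1 < M j)%N.
Proof.
move/upper_dens_eq1P => dense.
have /choice[g g_spec] : forall n, exists N, (n < N)%N /\ ((N - count_upto A N) * n.+1 < N)%N.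
  by move=> n; have [N] := dense n.+1 n.+1 isT; exists N.
pose M j := iter j.+1 g 0.
have M_incr j : (M j < M j.+1)%N by exact: (g_spec (M j)).1.
have M_gt j : (j < M j)%N.
  by elim: j => [|j IH]; [exact: (g_spec 0).1 | exact: leq_ltn_trans IH (M_incr j)].
exists M; split=> // -[|j]; first exact: g_spec 0.
split; first exact: M_gt.
by apply: leq_ltn_trans (g_spec (M j)).2; rewrite leq_mul2l ltnS M_gt orbT.
Qed.

Section small_values.
Variables (R : realType) (I : Type) (a : I -> nat -> \bar R).
Hypothesis a_ge0 : forall i n, (0 <= a i n)%E.

Definition small i k n : bool := (a i n < (k%:R^-1)%:E)%E.

Definition rarely_large (M : nat -> nat) : Prop :=
  forall k, (0 < k)%N -> forall i, exists nki, forall j, (nki <= j)%N ->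
    (M j)%:R * (1 - k%:R^-1) <= (\sum_(1 <= n < (M j).+1) (small i k n : nat))%:R :> R.

Lemma rarely_largeP M : rarely_large M <->
  forall k, (0 < k)%N -> forall i, exists nki, forall j, (nki <= j)%N ->
    (count (predC (small i k)) (iota 1 (M j)) * k <= M j)%N.
Proof.
have count_largeE i k j : count (predC (small i k)) (iota 1 (M j)) =
    (M j - \sum_(1 <= n < (M j).+1) (small i k n : nat))%N.
  by rewrite sum_nat_iota -{2}(size_iota 1 (M j)) -(count_predC (small i k)) addKn.
have count_small_le i k j : (\sum_(1 <= n < (M j).+1) (small i k n : nat) <= M j)%N.
  by rewrite sum_nat_iota -[X in (_ <= X)%N](size_iota 1) count_size.
split=> rare k k_gt0 i; have [nki rare_i] := rare k k_gt0 i; exists nki => j /rare_i.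
  by rewrite ler_freq_nat ?count_small_le // count_largeE.
by rewrite ler_freq_nat ?count_small_le // count_largeE.
Qed.

Lemma small_le i k k' n : (0 < k)%N -> (k <= k')%N -> small i k' n -> small i k n.
Proof.
move=> k_gt0 kk'; rewrite /small => /lt_le_trans; apply.
by rewrite lee_fin lef_pV2 ?posrE ?ltr0n ?ler_nat // (leq_trans k_gt0).
Qed.

Lemma dens1_rarely_large (A : set nat) :
  upper_dens R A = 1 -> (forall i, lim0_along A (a i)) ->
  exists M, (forall j, M j < M j.+1)%N /\ rarely_large M.
Proof.
move=> /dens1_increasing_seq[M [M_incr M_dense]] lim0A; exists M; split=> //.
apply/rarely_largeP => k k_gt0 i.
have [N0 smallA] := (lim0_alongP _ (a_ge0 i)).1 (lim0A i) k k_gt0.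
exists (k.*2 * N0.+1)%N => j le_j; have [j_lt_M dense_j] := M_dense j.
have large_le : (count (predC (small i k)) (iota 1 (M j)) <=
                 N0 + (M j - count_upto A (M j)))%N.
  rewrite count_upto_iota -{2}(size_iota 1 (M j)).
  rewrite -(count_predC (fun n => n \in A)) addKn.
  apply: count_iota_shift => n _ N0n; apply: contra => nA.
  exact: smallA (ltnW N0n) nA.
(* 2 k N0 <= j < M j  and  2 k (M j - #A) <= (j + 1) (M j - #A) < M j *)
nia.
Qed.

Definition all_small k (s : seq I) n : bool := all (fun i => small i k n) s.

Lemma rarely_large_all M : rarely_large M -> forall k s, (0 < k)%N ->
  exists T, forall j, (T <= j)%N ->
    (count (predC (all_small k s)) (iota 1 (M j)) * k <= size s * M j)%N.
Proof.
move=> /rarely_largeP rare k s k_gt0; elim: s => [|i s [T rare_s]].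
  by exists 0%N => j _; rewrite (eq_count (a2 := pred0)) ?count_pred0.
have [Ti rare_i] := rare k k_gt0 i.
exists (maxn Ti T) => j; rewrite geq_max => /andP[/rare_i le_i /rare_s le_s].
have large_le : (count (predC (all_small k (i :: s))) (iota 1 (M j)) <=
    count (predC (small i k)) (iota 1 (M j)) +
    count (predC (all_small k s)) (iota 1 (M j)))%N.
  pose either_large := predU (predC (small i k)) (predC (all_small k s)).
  rewrite -count_predUI (eq_count (a2 := either_large)) ?leq_addr //.
  by move=> n /=; rewrite negb_and.
by apply: leq_trans (leq_mul large_le (leqnn k)) _; rewrite mulnDl mulSn leq_add.
Qed.
End small_values.

Definition pickled_upto (T : countType) m : seq T := pmap (@pickle_inv T) (iota 0 m.+1).

Lemma size_pickled_upto (T : countType) m : (size (pickled_upto T m) <= m.+1)%N.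
Proof. by rewrite size_pmap -[X in (_ <= X)%N](size_iota 0) count_size. Qed.

Lemma mem_pickled_upto (T : countType) (x : T) m :
  (pickle x <= m)%N -> x \in pickled_upto T m.
Proof.
by move=> xm; rewrite mem_pmap; apply/mapP; exists (pickle x); rewrite ?pickleK_inv ?mem_iota.
Qed.

Lemma increasing_growing_subseq (M T : nat -> nat) : (forall j, M j < M j.+1)%N ->
  exists P : nat -> nat, (forall m, m.+2 * P m < P m.+1)%N /\
    forall m, exists2 j, (T m <= j)%N & P m = M j.
Proof.
move=> M_incr; have M_ge j : (j <= M j)%N.
  by elim: j => // j IH; exact: leq_ltn_trans IH (M_incr j).
pose J := fix J m := if m is m'.+1 then maxn (T m) (m.+1 * M (J m')).+1 else T 0.
exists (fun m => M (J m)); split=> m.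
  by apply: leq_trans (M_ge _); rewrite /= leq_max ltnSn orbT.
by exists (J m); case: m => //= m; rewrite leq_maxl.
Qed.

Section countable_family.
Variables (R : realType) (I : countType) (a : I -> nat -> \bar R).
Hypothesis a_ge0 : forall i n, (0 <= a i n)%E.
Local Notation small := (small a).

Definition good m : pred nat := all_small a (m.+1 ^ 2) (pickled_upto I m).

Section good_blocks.
Variable P : nat -> nat.
Hypothesis P_growth : forall m, (m.+2 * P m < P m.+1)%N.
Hypothesis P_good : forall m, (count (predC (good m)) (iota 1 (P m)) * m.+1 <= P m)%N.

Definition good_blocks : set nat := [set n | exists m, (P m < n <= P m.+1)%N /\ good m.+1 n].

Let P_mono : {homo P : m m' / (m < m')%N}.
Proof.
apply: homo_ltn => [y x z|m]; first exact: ltn_trans.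
by apply: leq_ltn_trans (P_growth m); rewrite leq_pmull.
Qed.

Let P_ge m : (m <= P m)%N.
Proof. by elim: m => // m IH; apply: leq_ltn_trans IH (P_mono (ltnSn m)). Qed.

Lemma upper_dens_good_blocks : upper_dens R good_blocks = 1.
Proof.
apply/upper_dens_eq1P => k N0 k_gt0.
pose m := maxn N0 k.*2; exists (P m.+1).
  by apply: leq_trans (P_ge _); rewrite ltnW // ltnS leq_maxl.
have good_le : (count (good m.+1) (iota 1 (P m.+1)) <=
                 P m + count_upto good_blocks (P m.+1))%N.
  rewrite count_upto_iota; apply: count_iota_shift => n.
  rewrite mem_iota => /andP[_ n_le] Pm_n good_n.
  by apply/mem_set; exists m; rewrite Pm_n -ltnS.
have := count_predC (good m.+1) (iota 1 (P m.+1)); rewrite size_iota.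
have := P_good m.+1; have := P_growth m.
have : (k.*2 <= m.+2)%N by rewrite /m; lia.
(* (N - #A) (m + 2) <= (P m + #(not good)) (m + 2) < 2 N  for  N = P (m + 1) *)
nia.
Qed.

Lemma lim0_along_good_blocks i : lim0_along good_blocks (a i).
Proof.
apply/(lim0_alongP _ (a_ge0 i)) => k k_gt0.
pose m1 := maxn (pickle i) k; exists (P m1).+1 => n m1_n /set_mem[m [/andP[Pm_n n_Pm] good_n]].
have m1_m : (m1 <= m.+1)%N.
  by rewrite leqNgt; apply/negP => /P_mono; lia.
apply: (small_le (k' := m.+2 ^ 2)) => //.
  by have := leq_maxr (pickle i) k; nia.
move: good_n => /allP; apply; apply: mem_pickled_upto.
by apply: leq_trans m1_m; rewrite leq_maxl.
Qed.
End good_blocks.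

Lemma good_eventually M : rarely_large a M -> forall m, exists T, forall j, (T <= j)%N ->
  (count (predC (good m)) (iota 1 (M j)) * m.+1 <= M j)%N.
Proof.
move=> rare m.
have [|T bad_le] := rarely_large_all rare (pickled_upto I m) (_ : 0 < m.+1 ^ 2)%N.
  by rewrite expn_gt0.
exists T => j /bad_le/leq_trans/(_ (leq_mul (size_pickled_upto I m) (leqnn (M j)))).
by rewrite expnS expn1 mulnA [(m.+1 * M j)%N]mulnC leq_pmul2r.
Qed.

Lemma rarely_large_dens1 M : (forall j, M j < M j.+1)%N -> rarely_large a M ->
  exists A, upper_dens R A = 1 /\ forall i, lim0_along A (a i).
Proof.
move=> M_incr /good_eventually /choice[T T_good].
have [P [P_growth P_M]] := increasing_growing_subseq T M_incr.
have P_good m : (count (predC (good m)) (iota 1 (P m)) * m.+1 <= P m)%N.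
  by have [j Tj ->] := P_M m; exact: T_good.
exists (good_blocks P); split.
  exact: upper_dens_good_blocks.
exact: lim0_along_good_blocks.
Qed.
End countable_family.

Theorem mainTheorem8 (R : realType) (d : measure_display) (X : measurableType d)
  (mu : {measure set X -> \bar R}) (phi : X -> X) (phi_meas : measurable_fun setT phi)
  (I : countType) (B : I -> set X)
  (B_meas : forall i, measurable (B i)) (B_pos : forall i, (0 < mu (B i))%E) :
  (exists A : set nat, upper_dens R A = 1 /\
     forall i, lim0_along A (fun n => mu (iter n phi @^-1` B i)))
  <->
  (exists M : nat -> nat, (forall j, (M j < M j.+1)%N) /\
     forall (k : nat), (0 < k)%N -> forall i : I, exists nki : nat, forall j, (nki <= j)%N ->
       (M j)%:R * (1 - k%:R^-1) <=
       ((\sum_(1 <= n < (M j).+1)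
           ((mu (iter n phi @^-1` B i) < (k%:R^-1)%:E)%E : nat))%:R : R)).
Proof.
pose a i n := mu (iter n phi @^-1` B i).
have a_ge0 i n : (0 <= a i n)%E by exact: measure_ge0.
split=> [[A [densA lim0A]] | [M [M_incr rare]]].
  exact: (dens1_rarely_large a_ge0 densA lim0A).
exact: (rarely_large_dens1 a_ge0 M_incr rare).
Qed.
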